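(* Let $G$ be a group, $N$ a normal subgroup and $c\in\mathrm{C}_1(G;\mathbb{Z})$. The following are equivalent: (i) there exist $k,l\in\mathbb{Z}_{\ge0}$ and $x_1,\dots,x_k,\check x_1,\dots,\check x_l\in N$ with $c=x_1+\cdots+x_k-\check x_1-\cdots-\check x_l$ and $x_1\cdots x_k\check x_1^{-1}\cdots\check x_l^{-1}\in[G,N]$; (ii) $c\in\mathcal{C}_{\mathbb{Z}}(G,N)$.
   Context: $[G,N]$ is the subgroup generated by $[g,x]=gxg^{-1}x^{-1}$, $g\in G$, $x\in N$. $\mathrm{C}_1(G;A)$ is the free $A$-module on $G$, $\mathrm{C}_2(G;A)$ the free $A$-module on $G\times G$, $\partial(g_1,g_2)=g_2-g_1g_2+g_1$. $\mathrm{C}'_2(G,N;A)$ is the submodule generated by pairs $(g_1,g_2)$ with $g_1\in N$ or $g_2\in N$; $\mathrm{B}'_1(G,N;A)=\partial\,\mathrm{C}'_2(G,N;A)$; $\mathcal{C}_A(G,N)=\mathrm{C}_1(N;A)\cap\mathrm{B}'_1(G,N;A)$. *)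

From HB Require Import structures.
From mathcomp Require Import all_boot all_order.
From mathcomp Require Import monoid ssralg ssrint.

Set Implicit Arguments.
Unset Strict Implicit.
Unset Printing Implicit Defensive.

Import GRing.Theory.

Section Defs.
Variable G : groupType.

Local Open Scope group_scope.

Definition is_subgroup (H : G -> Prop) : Prop :=
  H 1 /\ (forall x y, H x -> H y -> H (x * y)) /\ (forall x, H x -> H x^-1).

Definition is_normal (N : G -> Prop) : Prop :=
  is_subgroup N /\ (forall g x, N x -> N (g * x * g^-1)).

Definition pcomm (g x : G) : G := g * x * g^-1 * x^-1.

Definition commGN (N : G -> Prop) (y : G) : Prop :=
  forall H : G -> Prop, is_subgroup H ->
    (forall g x, N x -> H (pcomm g x)) -> H y.

Definition gprod (s : seq G) : G := foldr (fun a b => a * b) 1 s.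

Local Close Scope group_scope.
Local Open Scope ring_scope.

(* 1-chains C_1(G;Z): finitely supported functions G -> int,
   i.e. the free Z-module on G. *)
Definition chain := G -> int.

Definition fin_supp (c : chain) : Prop :=
  exists s : seq G, forall g, c g != 0 -> g \in s.

Definition delta (g : G) : chain := fun h => if h == g then 1 else 0.

Definition chain0 : chain := fun _ => 0.
Definition chain_add (c d : chain) : chain := fun h => c h + d h.
Definition chain_opp (c : chain) : chain := fun h => - c h.
Definition chain_scale (a : int) (c : chain) : chain := fun h => a * c h.

Definition chain_of_seq (s : seq G) : chain := foldr (fun g c => chain_add (delta g) c) chain0 s.

(* boundary of a generator (g1,g2) of C_2(G;Z): g2 - g1 g2 + g1 *)
Definition bd (p : G * G) : chain :=
  chain_add (chain_add (delta p.2) (chain_opp (delta (p.1 * p.2)%g))) (delta p.1).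

(* boundary of a finite Z-linear combination of generators of C_2(G;Z),
   given as a list of (coefficient, generator) pairs. *)
Definition bd_comb (l : seq (int * (G * G))) : chain :=
  foldr (fun ap c => chain_add (chain_scale ap.1 (bd ap.2)) c) chain0 l.

Definition in_C1N (N : G -> Prop) (c : chain) : Prop :=
  forall g, c g != 0 -> N g.

(* c lies in B'_1(G,N;Z) = boundary of C'_2(G,N;Z), where C'_2 is generated
   by the pairs (g1,g2) with g1 in N or g2 in N. *)
Definition in_B1' (N : G -> Prop) (c : chain) : Prop :=
  exists l : seq (int * (G * G)),
    (forall ap, ap \in l -> N ap.2.1 \/ N ap.2.2) /\ c = bd_comb l.

Definition in_scrC (N : G -> Prop) (c : chain) : Prop :=
  in_C1N N c /\ in_B1' N c.

End Defs.

From HB Require Import structures.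
From mathcomp Require Import all_boot all_order.
From mathcomp Require Import monoid ssralg ssrint.
From mathcomp Require Import ssrnum ring zify.
From Stdlib Require Import FunctionalExtensionality PropExtensionality ClassicalEpsilon.

(* A word in G is a list of letters g^{+1} or g^{-1}; it has a chain (the
   signed count of its letters) and, given f : G -> N, a value in N.
   Since N / [G,N] is abelian, the value modulo [G,N] depends only on the
   chain: moving a letter a of N past u costs the commutator [u,a].
   (i) => (ii): for a word w in N, [w] - [value of w] is a sum of boundaries
   of pairs in C'_2, and so is [p] for every p in [G,N].
   (ii) => (i): write c = d(sum a_i (x_i, y_i)) as a word with letters
   y, (xy)^{-1}, x for each generator.  Evaluating with f g = r(g)^-1 g,
   for a transversal r of G/N, sends each such triple into [G,N]; since c is
   supported in N, the letters outside N cancel and the remaining word in N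
   has the required value. *)

Set Implicit Arguments.
Unset Strict Implicit.
Unset Printing Implicit Defensive.
Import GRing.Theory Num.Theory.

Local Open Scope ring_scope.

Section Words.
Variable G : groupType.

Definition sgn (b : bool) : int := if b then 1 else -1.

Definition letter_val (f : G -> G) (b : bool) (g : G) : G :=
  if b then f g else (f g)^-1%g.

Definition word_chain (w : seq (bool * G)) : chain G :=
  foldr (fun p c => chain_add (chain_scale (sgn p.1) (delta p.2)) c) (@chain0 G) w.

Definition word_val (f : G -> G) (w : seq (bool * G)) : G :=
  foldr (fun p v => (letter_val f p.1 p.2 * v)%g) 1%g w.

Definition word_inv (w : seq (bool * G)) : seq (bool * G) :=
  map (fun p => (~~ p.1, p.2)) (rev w).

Lemma sgnN b : sgn (~~ b) = - sgn b. Proof. by case: b. Qed.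

Lemma letter_valN f b g : letter_val f (~~ b) g = (letter_val f b g)^-1%g.
Proof. by case: b => //=; rewrite invgK. Qed.

Lemma word_chain_cat w1 w2 h : word_chain (w1 ++ w2) h = word_chain w1 h + word_chain w2 h.
Proof.
elim: w1 => [|p w1 IH] /=; first by rewrite /chain0 add0r.
by rewrite /chain_add IH addrA.
Qed.

Lemma word_val_cat f w1 w2 : word_val f (w1 ++ w2) = (word_val f w1 * word_val f w2)%g.
Proof. by elim: w1 => [|p w1 IH] /=; [rewrite mul1g | rewrite IH mulgA]. Qed.

Lemma word_chain_inv w h : word_chain (word_inv w) h = - word_chain w h.
Proof.
elim: w => [|p w IH]; first by rewrite /= /chain0 oppr0.
rewrite /word_inv rev_cons -cats1 map_cat word_chain_cat -/(word_inv w) IH /=.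
by rewrite /chain_add /chain_scale /chain0 sgnN; ring.
Qed.

Lemma word_val_inv f w : word_val f (word_inv w) = (word_val f w)^-1%g.
Proof.
elim: w => [|p w IH]; first by rewrite /= invg1.
by rewrite /word_inv rev_cons -cats1 map_cat word_val_cat -/(word_inv w) IH /= letter_valN mulg1 invgM.
Qed.

Lemma word_chain_flatten_nseq k w h :
  word_chain (flatten (nseq k w)) h = k%:Z * word_chain w h.
Proof.
elim: k => [|k IH] /=; first by rewrite /chain0 mul0r.
by rewrite word_chain_cat IH -addn1 PoszD; ring.
Qed.

Lemma word_chain_split w h : word_chain w h =
  word_chain (map (pair true) [seq p.2 | p <- w & p.1]) h +
  word_chain (map (pair false) [seq p.2 | p <- w & ~~ p.1]) h.
Proof.
elim: w => [|[b g] w IH] /=; first by rewrite /chain0 addr0.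
by case: b => /=; rewrite /chain_add /chain_scale IH; ring.
Qed.

Lemma word_chain_filter (P : pred G) w h :
  word_chain (filter (fun p => P p.2) w) h = if P h then word_chain w h else 0.
Proof.
elim: w => [|[b g] w IH] /=; first by rewrite /chain0; case: ifP.
case: (eqVneq h g) => [<-|hg]; first by case Ph: (P h) => /=; rewrite ?/chain_add IH Ph.
have dg : delta g h = 0 by rewrite /delta (negbTE hg).
by case: (P g) => /=; rewrite /chain_add /chain_scale ?dg ?mulr0 ?add0r IH.
Qed.

Lemma word_chain_sign_ge0 b g w : (~~ b, g) \notin w -> 0 <= sgn b * word_chain w g.
Proof.
elim: w => [|[b' g'] w IH] /=; first by rewrite /chain0 mulr0.
rewrite inE negb_or => /andP [hne /IH {}IH].
rewrite /chain_add /chain_scale mulrDr; apply: addr_ge0 => //.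
rewrite /delta; case: eqP => [eg|_]; last by rewrite !mulr0.
by subst g'; case: b b' hne {IH} => [] [] //=; rewrite eqxx.
Qed.

Lemma chain_of_seqE (s : seq G) h : chain_of_seq s h = word_chain (map (pair true) s) h.
Proof. by elim: s => [|x s IH] //=; rewrite /chain_add /chain_scale IH mul1r. Qed.

Lemma word_chain_neg (s : seq G) h : word_chain (map (pair false) s) h = - chain_of_seq s h.
Proof.
elim: s => [|x s IH] /=; first by rewrite /chain0 oppr0.
by rewrite /chain_add /chain_scale IH; ring.
Qed.

Lemma chain_of_seq_supp (s : seq G) h : chain_of_seq s h != 0 -> h \in s.
Proof.
elim: s => [|x s IH] /=; first by rewrite /chain0.
case: (eqVneq h x) => [-> _|hx]; first by rewrite mem_head.
rewrite /chain_add /delta (negbTE hx) add0r inE => /IH ->; by rewrite orbT.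
Qed.

Lemma word_val_pos f (s : seq G) : {in s, f =1 id} ->
  word_val f (map (pair true) s) = gprod s.
Proof.
elim: s => [|x s IH] hf //=.
by rewrite hf ?mem_head // IH // => y hy; apply: hf; rewrite inE hy orbT.
Qed.

Lemma word_val_neg f (s : seq G) : {in s, f =1 id} ->
  word_val f (map (pair false) s) = gprod (map (fun y => y^-1%g) s).
Proof.
elim: s => [|x s IH] hf //=.
by rewrite hf ?mem_head // IH // => y hy; apply: hf; rewrite inE hy orbT.
Qed.

End Words.

Section Commutators.
Variable G : groupType.
Variable N : G -> Prop.
Hypothesis N_subgroup : is_subgroup N.

Local Open Scope group_scope.

Lemma word_val_in f w : (forall g, N (f g)) -> N (word_val f w).
Proof.
case: N_subgroup => N1 [NM NV] fN; elim: w => [|[b g] w IH] //=.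
by apply: NM => //; case: b => /=; auto.
Qed.

Lemma commGN1 : commGN N 1. Proof. by move=> H [? _] _. Qed.

Lemma commGNM x y : commGN N x -> commGN N y -> commGN N (x * y).
Proof. by move=> hx hy H hH hg; case: (hH) => _ [hM _]; apply: hM; [exact: hx|exact: hy]. Qed.

Lemma commGN_pcomm g x : N x -> commGN N (pcomm g x).
Proof. by move=> hx H _ hg; apply: hg. Qed.

Lemma mul_conj_pcomm (u a v : G) : u * (a * (u^-1 * v)) = pcomm u a * (a * v).
Proof. by rewrite /pcomm !mulgA mulgVK. Qed.

Lemma word_val_commGN f w : (forall g, N (f g)) ->
  (forall h, word_chain w h = 0) -> commGN N (word_val f w).
Proof.
move=> fN; have [n] := ubnP (size w); elim: n w => // n IH [|[b g] w] /= hs hw0.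
  exact: commGN1.
have hin : (~~ b, g) \in w.
  apply/negPn/negP => /word_chain_sign_ge0; move: (hw0 g) => {hs IH}.
  by rewrite /chain_add /chain_scale /delta eqxx mulr1; case: b {hw0} => /=; lia.
case/splitPr: hin hs hw0 => u v hs hw0.
rewrite word_val_cat /= letter_valN mul_conj_pcomm -word_val_cat.
apply: commGNM; first by apply: commGN_pcomm; apply: word_val_in.
apply: IH => [|h]; first by move: hs; rewrite !size_cat /=; lia.
move: (hw0 h); rewrite /chain_add /chain_scale !word_chain_cat /=.
by rewrite /chain_add /chain_scale sgnN mulNr; lia.
Qed.

Lemma word_val_congr f w1 w2 : (forall g, N (f g)) ->
  (forall h, word_chain w1 h = word_chain w2 h) ->
  commGN N (word_val f w2) -> commGN N (word_val f w1).
Proof.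
move=> fN e c2.
have : commGN N (word_val f (w1 ++ word_inv w2)).
  by apply: word_val_commGN => // h; rewrite word_chain_cat word_chain_inv e subrr.
rewrite word_val_cat word_val_inv => c; have := commGNM c c2; by rewrite mulgVK.
Qed.

Lemma word_val_flatten f (ws : seq (seq (bool * G))) :
  (forall w, w \in ws -> commGN N (word_val f w)) -> commGN N (word_val f (flatten ws)).
Proof.
elim: ws => [|w ws IH] hw /=; first exact: commGN1.
rewrite word_val_cat; apply: commGNM; first by apply: hw; rewrite mem_head.
by apply: IH => w' hw'; apply: hw; rewrite inE hw' orbT.
Qed.

End Commutators.

Section Boundaries.
Variable G : groupType.
Variable N : G -> Prop.

Lemma in_B1'_eq c d : in_B1' N c -> (forall h, c h = d h) -> in_B1' N d.
Proof. by move=> hc e; have <- : c = d by apply: functional_extensionality. Qed.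

Lemma bd_comb_cat (l1 l2 : seq (int * (G * G))) h :
  bd_comb (l1 ++ l2) h = bd_comb l1 h + bd_comb l2 h.
Proof.
elim: l1 => [|a l1 IH] /=; first by rewrite /chain0 add0r.
by rewrite /chain_add IH addrA.
Qed.

Lemma in_B1'_add c d : in_B1' N c -> in_B1' N d -> in_B1' N (chain_add c d).
Proof.
move=> [l1 [h1 ->]] [l2 [h2 ->]]; exists (l1 ++ l2); split.
  by move=> ap; rewrite mem_cat => /orP [] ?; auto.
by apply: functional_extensionality => h; rewrite bd_comb_cat.
Qed.

Lemma in_B1'_opp c : in_B1' N c -> in_B1' N (chain_opp c).
Proof.
move=> [l [hl ->]]; exists (map (fun ap => (- ap.1, ap.2)) l); split.
  by move=> ap /mapP [a ha ->] /=; apply: hl.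
apply: functional_extensionality => h; elim: l {hl} => [|a l IH] /=.
  by rewrite /chain_opp /chain0 oppr0.
by rewrite /chain_add /chain_scale -IH /chain_opp opprD mulNr.
Qed.

Lemma in_B1'_bd x y : N x \/ N y -> in_B1' N (bd (x, y)).
Proof.
move=> hxy; exists [:: (1, (x, y))]; split; first by move=> ap; rewrite inE => /eqP ->.
by apply: functional_extensionality => h; rewrite /= /chain_add /chain_scale /chain0 mul1r addr0.
Qed.

End Boundaries.

Arguments in_B1'_bd {G N} x y.

Ltac unfold_chains := rewrite /bd /chain_add /chain_opp /chain_scale /chain0 /=.

Section NormalSubgroup.
Variable G : groupType.
Variable N : G -> Prop.
Hypothesis hN : is_normal N.

Local Open Scope group_scope.

Lemma normal1 : N 1. Proof. by case: hN => [[]]. Qed.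
Lemma normalM x y : N x -> N y -> N (x * y). Proof. by case: hN => [[_ []]]; auto. Qed.
Lemma normalV x : N x -> N x^-1. Proof. by case: hN => [[_ []]]; auto. Qed.
Lemma normalJ g x : N x -> N (g * x * g^-1). Proof. by case: hN; auto. Qed.

Local Close Scope group_scope.

Lemma in_B1'_delta1 : in_B1' N (delta 1%g).
Proof.
apply: in_B1'_eq (in_B1'_bd _ 1%g (or_introl normal1)) _ => h.
by unfold_chains; rewrite mulg1; ring.
Qed.

(* With y = g x g^-1 we have y g = g x, and the boundaries below telescope
   to [y x^-1] = [[g,x]]. *)
Lemma in_B1'_delta_pcomm g x : N x -> in_B1' N (delta (pcomm g x)).
Proof.
move=> hx; set y := (g * x * g^-1)%g.
have hy : N y by apply: normalJ.
have hyg : (y * g = g * x)%g by rewrite /y mulgVK.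
have := in_B1'_add (in_B1'_add (in_B1'_add (in_B1'_add
  (in_B1'_opp (in_B1'_bd _ x^-1%g (or_introl hy))) (in_B1'_bd _ x^-1%g (or_introl hx)))
  in_B1'_delta1) (in_B1'_bd _ g (or_introl hy))) (in_B1'_opp (in_B1'_bd g _ (or_intror hx))).
by move/in_B1'_eq; apply=> h; unfold_chains; rewrite hyg mulgV /pcomm -/y; ring.
Qed.

Lemma in_B1'_delta_commGN p : commGN N p -> in_B1' N (delta p).
Proof.
move=> hp; suff [] : N p /\ in_B1' N (delta p) by [].
apply: (hp (fun y => N y /\ in_B1' N (delta y))); last first.
  move=> g x hx; split; last exact: in_B1'_delta_pcomm.
  by apply: normalM; [apply: normalJ|apply: normalV].
split; first by split; [exact: normal1|exact: in_B1'_delta1].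
split=> [x y [hx bx] [hy b_y]|x [hx bx]]; split.
- exact: normalM.
- apply: in_B1'_eq (in_B1'_add (in_B1'_add bx b_y) (in_B1'_opp (in_B1'_bd _ y (or_introl hx)))) _.
  by move=> h; unfold_chains; ring.
- exact: normalV.
- apply: in_B1'_eq (in_B1'_add (in_B1'_add (in_B1'_bd _ x^-1%g (or_introl hx))
    (in_B1'_opp bx)) in_B1'_delta1) _.
  by move=> h; unfold_chains; rewrite mulgV; ring.
Qed.

Lemma in_B1'_word_chain w : (forall p, p \in w -> N p.2) ->
  in_B1' N (chain_add (word_chain w) (chain_opp (delta (word_val id w)))).
Proof.
elim: w => [|[b g] w IH] hw /=.
  by apply: in_B1'_eq (in_B1'_opp in_B1'_delta1) _ => h; unfold_chains; ring.
have hg : N g by apply: (hw (b, g)); rewrite mem_head.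
have {}IH : in_B1' N (chain_add (word_chain w) (chain_opp (delta (word_val id w)))).
  by apply: IH => p hp; apply: hw; rewrite inE hp orbT.
case: b {hw} => /=.
  apply: in_B1'_eq (in_B1'_add IH (in_B1'_bd _ (word_val id w) (or_introl hg))) _.
  by move=> h; unfold_chains; ring.
apply: in_B1'_eq (in_B1'_add (in_B1'_add (in_B1'_add IH
  (in_B1'_bd _ (word_val id w) (or_introl (normalV hg))))
  (in_B1'_opp (in_B1'_bd _ g^-1%g (or_introl hg)))) (in_B1'_opp in_B1'_delta1)) _.
by move=> h; unfold_chains; rewrite mulgV; ring.
Qed.

(* A representative of each left coset gN, chosen to be 1 on N itself so
   that [Npart] below is the identity on N. *)
Definition coset_rep (g : G) : G :=
  epsilon (inhabits 1%g) (fun r => N (r^-1 * g)%g /\ (N g -> r = 1%g)).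

Definition Npart (g : G) : G := ((coset_rep g)^-1 * g)%g.

Lemma coset_repP g : N ((coset_rep g)^-1 * g)%g /\ (N g -> coset_rep g = 1%g).
Proof.
apply: (epsilon_spec (inhabits 1%g) (fun r => N (r^-1 * g)%g /\ (N g -> r = 1%g))).
case: (classic (N g)) => hg.
  by exists 1%g; rewrite invg1 mul1g.
by exists g; rewrite mulVg; split=> [|//]; apply: normal1.
Qed.

Lemma Npart_in g : N (Npart g).
Proof. exact: (coset_repP g).1. Qed.

Lemma Npart_id x : N x -> Npart x = x.
Proof. by move=> hx; rewrite /Npart (coset_repP x).2 // invg1 mul1g. Qed.

Lemma coset_rep_eq g g' :
  (forall r, N (r^-1 * g)%g <-> N (r^-1 * g')%g) -> coset_rep g = coset_rep g'.
Proof.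
move=> e; have e1 : N g <-> N g' by have := e 1%g; rewrite invg1 !mul1g.
rewrite /coset_rep; congr epsilon; apply: functional_extensionality => r.
by apply: propositional_extensionality; rewrite e e1.
Qed.

Lemma coset_repMl n g : N n -> coset_rep (n * g)%g = coset_rep g.
Proof.
move=> hn; apply: coset_rep_eq => r.
have -> : (r^-1 * (n * g) = (r^-1 * n * r^-1^-1) * (r^-1 * g))%g.
  by rewrite invgK !mulgA mulgK.
split=> h; last exact: normalM (normalJ _ hn) h.
by have := normalM (normalV (normalJ r^-1 hn)) h; rewrite mulgA mulVg mul1g.
Qed.

Lemma coset_repMr g n : N n -> coset_rep (g * n)%g = coset_rep g.
Proof.
move=> hn; apply: coset_rep_eq => r; rewrite mulgA; split=> h; last exact: normalM h hn.
by have := normalM h (normalV hn); rewrite mulgK.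
Qed.

Definition bd_word b (x y : G) : seq (bool * G) := [:: (b, y); (~~ b, (x * y)%g); (b, x)].

Lemma word_chain_bd_word b x y h : word_chain (bd_word b x y) h = sgn b * bd (x, y) h.
Proof. by rewrite /= sgnN; unfold_chains; ring. Qed.

(* Npart y * Npart (xy)^-1 * Npart x is 1 or a commutator, because
   coset_rep is constant on the cosets gN = Ng. *)
Lemma word_val_bd_word b x y : N x \/ N y -> commGN N (word_val Npart (bd_word b x y)).
Proof.
case=> h; rewrite /= letter_valN /letter_val.
  rewrite /Npart coset_repMl // -/(Npart x) Npart_id //.
  case: b => /=.
    have -> : ((coset_rep y)^-1 * y * (((coset_rep y)^-1 * (x * y))^-1 * (x * 1)) =
      pcomm (coset_rep y)^-1 x^-1)%g.
      by rewrite /pcomm !invgM !invgK mulg1 !mulgA mulgK.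
    by apply: commGN_pcomm; apply: normalV.
  rewrite invgK; have -> : (((coset_rep y)^-1 * y)^-1 *
      (((coset_rep y)^-1 * (x * y)) * (x^-1 * 1)) = pcomm y^-1 x)%g.
    by rewrite /pcomm !invgM !invgK mulg1 !mulgA mulgK.
  exact: commGN_pcomm.
rewrite /Npart coset_repMr // -/(Npart y) Npart_id //.
case: b => /=.
  have -> : (y * (((coset_rep x)^-1 * (x * y))^-1 * ((coset_rep x)^-1 * x * 1)) = 1)%g.
    by rewrite !invgM !invgK mulg1 !mulgA mulgV mul1g mulgK mulVg.
  exact: commGN1.
rewrite invgK; have -> : (y^-1 * (((coset_rep x)^-1 * (x * y)) *
    (((coset_rep x)^-1 * x)^-1 * 1)) = pcomm y^-1 ((coset_rep x)^-1 * x))%g.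
  by rewrite /pcomm !invgM !invgK mulg1 !mulgA.
by apply: commGN_pcomm; apply: Npart_in.
Qed.

Definition comb_word (l : seq (int * (G * G))) : seq (bool * G) :=
  flatten (map (fun ap => flatten (nseq `|ap.1|%N (bd_word (0 <= ap.1) ap.2.1 ap.2.2))) l).

Lemma word_chain_comb_word l h : word_chain (comb_word l) h = bd_comb l h.
Proof.
elim: l => [|[a [x y]] l IH] //=.
rewrite /comb_word /= word_chain_cat -/(comb_word l) IH word_chain_flatten_nseq.
rewrite word_chain_bd_word /chain_add /chain_scale /= mulrA [_ * sgn _]mulrC.
by case: a => n //=; rewrite ?mul1r // NegzE mulN1r.
Qed.

Lemma word_val_comb_word l : (forall ap, ap \in l -> N ap.2.1 \/ N ap.2.2) ->
  commGN N (word_val Npart (comb_word l)).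
Proof.
move=> hl; apply: word_val_flatten => w /mapP [ap hap ->].
apply: word_val_flatten => w'; rewrite mem_nseq => /andP [_ /eqP ->].
exact: word_val_bd_word (hl ap hap).
Qed.

Definition inN (g : G) : bool := if excluded_middle_informative (N g) then true else false.

Lemma inNP g : reflect (N g) (inN g).
Proof. by rewrite /inN; case: excluded_middle_informative => h; constructor. Qed.

Definition commGN_presentation (c : chain G) : Prop :=
  exists xs ys : seq G,
    (forall x, x \in xs -> N x) /\ (forall y, y \in ys -> N y) /\
    c = chain_add (chain_of_seq xs) (chain_opp (chain_of_seq ys)) /\
    commGN N (gprod xs * gprod (map (fun y => y^-1) ys))%g.

Lemma in_scrC_of_presentation c : commGN_presentation c -> in_scrC N c.
Proof.
move=> [xs [ys [hx [hy [-> hc]]]]]; split.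
  move=> g; rewrite /chain_add /chain_opp => hg.
  case: (boolP (g \in xs)) => [/hx //|nx]; case: (boolP (g \in ys)) => [/hy //|ny].
  move: hg; rewrite (contraNeq (@chain_of_seq_supp _ _ _) nx).
  by rewrite (contraNeq (@chain_of_seq_supp _ _ _) ny) oppr0 addr0 eqxx.
set w := map (pair true) xs ++ map (pair false) ys.
have hw p : p \in w -> N p.2 by rewrite mem_cat => /orP [] /mapP [x ? ->]; auto.
have := in_B1'_add (in_B1'_word_chain hw) (in_B1'_delta_commGN hc).
rewrite /w word_val_cat word_val_pos // word_val_neg //.
move/in_B1'_eq; apply=> h.
by rewrite /chain_add /chain_opp word_chain_cat chain_of_seqE word_chain_neg; ring.
Qed.

Lemma presentation_of_in_scrC c : in_scrC N c -> commGN_presentation c.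
Proof.
move=> [hC [l [hl ec]]]; subst c.
set wN := filter (fun p => inN p.2) (comb_word l).
have wN_chain h : word_chain wN h = bd_comb l h.
  rewrite word_chain_filter word_chain_comb_word.
  by case: inNP => // hh; apply/esym/eqP/negPn/negP => /hC.
have hwN p : p \in wN -> N p.2 by rewrite mem_filter => /andP [/inNP].
set xs := [seq p.2 | p <- wN & p.1].
set ys := [seq p.2 | p <- wN & ~~ p.1].
have hx x : x \in xs -> N x by case/mapP => p; rewrite mem_filter => /andP [_ /hwN] ? ->.
have hy y : y \in ys -> N y by case/mapP => p; rewrite mem_filter => /andP [_ /hwN] ? ->.
exists xs, ys; do 2!split=> //; split.
  apply: functional_extensionality => h.
  by rewrite -wN_chain (word_chain_split wN) word_chain_neg -chain_of_seqE.
rewrite -(word_val_pos (f := Npart)) => [|x /hx /Npart_id //].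
rewrite -(word_val_neg (f := Npart)) => [|y /hy /Npart_id //].
rewrite -word_val_cat; apply: (word_val_congr hN.1 Npart_in _ (word_val_comb_word hl)) => h.
by rewrite word_chain_cat -word_chain_split wN_chain word_chain_comb_word.
Qed.

End NormalSubgroup.

Theorem lemma5p16 (G : groupType) (N : G -> Prop) (c : chain G) :
  is_normal N -> fin_supp c ->
  ((exists xs ys : seq G,
      (forall x, x \in xs -> N x) /\ (forall y, y \in ys -> N y) /\
      c = chain_add (chain_of_seq xs) (chain_opp (chain_of_seq ys)) /\
      commGN N (gprod xs * gprod (map (fun y => y^-1) ys))%g)
   <-> in_scrC N c).
Proof.
move=> hN _; split; [exact: in_scrC_of_presentation | exact: presentation_of_in_scrC].
Qed.
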